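(* Let $0<q<p\le1$, $n\in\mathbb{N}$, and for $x\in[0,1]$ let $\psi_i(t)=(t-x)^i$, $i=1,2$. Then for all $x\in[0,1]$, $$\widetilde{M}_{n,k}^{(p,q)}(\psi_1;x)\le \frac{p^n-q^nx}{q^2[n]_{p,q}}+\left(\frac1q-1\right)x,$$ $$\widetilde{M}_{n,k}^{(p,q)}(\psi_2;x)\le x^2\left(1-\frac{1}{q^2}+\frac{2(q+1)}{q^2[n]_{p,q}}\right)+\frac{(p+q)^2}{q^5}\frac{(p^n-q^nx)}{[n]_{p,q}}x+\frac{p(p+q)}{q^6}\frac{(p^n-q^nx)(p^{n-1}-q^{n-1}x)}{[n]_{p,q}[n-1]_{p,q}}.$$
   Context: For $0<q<p\le1$: $[n]_{p,q}=\frac{p^n-q^n}{p-q}$; $[n]_{p,q}!=[1]_{p,q}\cdots[n]_{p,q}$, $[0]_{p,q}!=1$; $\begin{bmatrix}n\\k\end{bmatrix}_{p,q}=\frac{[n]_{p,q}!}{[k]_{p,q}![n-k]_{p,q}!}$; $(x+y)_{p,q}^n=\prod_{j=0}^{n-1}(p^jx+q^jy)$. The $(p,q)$-integral is $\int_0^a f(t)\,d_{p,q}t=(p-q)a\sum_{j=0}^\infty \frac{q^j}{p^{j+1}}f\!\left(\frac{q^j}{p^{j+1}}a\right)$. Define $m_{n,k}^{(p,q)}(x)=\frac{1}{p^{kn+n(n+1)/2}}\begin{bmatrix}n+k\\k\end{bmatrix}_{p,q}x^k(1-x)^{n+1}_{p,q}$ and $b_{n,k}^{(p,q)}(qt)=\frac{1}{p^{k(n-1)+n(n-1)/2}}\begin{bmatrix}n+k+1\\k\end{bmatrix}_{p,q}(qt)^k(1-qt)^n_{p,q}$.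 The operator is $$\widetilde{M}_{n,k}^{(p,q)}(f;x)=\frac{[n+1]_{p,q}}{p^n}\sum_{k=0}^\infty m_{n,k}^{(p,q)}(x)\,(pq)^{-k}\int_0^1 b_{n,k}^{(p,q)}(qt)f(t)\,d_{p,q}t,\quad 0\le x<1,$$ and $\widetilde{M}_{n,k}^{(p,q)}(f;1)=f(1)$; here $\psi_i$ is applied as a function of $t$ with $x$ fixed. *)

From Stdlib Require Import Reals.
From Coquelicot Require Import Coquelicot.
Open Scope R_scope.

Definition pq_int (p q : R) (n : nat) : R := (p ^ n - q ^ n) / (p - q).

Fixpoint pq_fact (p q : R) (n : nat) : R :=
  match n with
  | O => 1
  | S m => pq_fact p q m * pq_int p q (S m)
  end.

Definition pq_binom (p q : R) (n k : nat) : R :=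
  pq_fact p q n / (pq_fact p q k * pq_fact p q (n - k)).

Fixpoint pq_pow (p q a b : R) (n : nat) : R :=
  match n with
  | O => 1
  | S m => pq_pow p q a b m * (p ^ m * a + q ^ m * b)
  end.

Definition pq_integral (p q a : R) (f : R -> R) : R :=
  (p - q) * a * Series (fun j => q ^ j / p ^ (S j) * f (q ^ j / p ^ (S j) * a)).

Definition m_nk (p q : R) (n k : nat) (x : R) : R :=
  / p ^ (k * n + n * (n + 1) / 2)%nat * pq_binom p q (n + k) k * x ^ k
  * pq_pow p q 1 (- x) (n + 1).

(* b_{n,k}^{(p,q)}(qt); the exponent k(n-1)+n(n-1)/2 is computed in nat,
   which is exact for n >= 1 (the only case used in the theorem). *)
Definition b_nk (p q : R) (n k : nat) (t : R) : R :=
  / p ^ (k * (n - 1) + n * (n - 1) / 2)%nat * pq_binom p q (n + k + 1) k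
  * (q * t) ^ k * pq_pow p q 1 (- (q * t)) n.

Definition Mop (p q : R) (n : nat) (f : R -> R) (x : R) : R :=
  if Rlt_dec x 1 then
    pq_int p q (S n) / p ^ n *
    Series (fun k => m_nk p q n k x * / (p * q) ^ k *
                     pq_integral p q 1 (fun t => b_nk p q n k t * f t))
  else f 1.

From Stdlib Require Import Reals Lra Lia.
From Coquelicot Require Import Coquelicot.
Open Scope R_scope.

(* Write q = p r with 0 < r < 1.  The powers of p in m_{n,k} cancel, and m_{n,k}(x) becomes
   the q-negative-binomial weight w_k = [n+k choose k]_r x^k (x; r)_{n+1}, which sums to 1.
   The nodes of the (p,q)-integral are t_j = r^j / p, so integrating b_{n,k} against 1, t, t^2
   yields q-Beta sums, and for quadratic f the operator becomes
   sum_k w_k (c0 + c1 A_k / p + c2 A_k A_{k+1} / p^2) with A_k = [k+1]_r / [n+k+2]_r.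
   Bounding A_k and A_k A_{k+1} termwise by rational functions of [k]_r whose weighted sums are
   explicit (factorial moments of the weights) gives both estimates; in the second one the
   coefficient of x^2 is controlled by Bernoulli's inequality.  At x = 1 the operator returns
   f(1) = 0 and the right-hand sides are nonnegative. *)

Lemma pow_le_one x m : 0 <= x <= 1 -> x ^ m <= 1.
Proof. intros Hx. rewrite <- (pow1 m). now apply pow_incr. Qed.

Lemma Bernoulli_pow_ineq p m : 0 < p <= 1 -> INR m * p ^ m * (1 - p) <= 1 - p ^ m.
Proof.
  intros Hp. induction m as [|m IH]; [simpl; lra|].
  rewrite S_INR; simpl pow.
  pose proof (pow_lt p m (proj1 Hp)). pose proof (pow_le_one p m ltac:(lra)).
  pose proof (pos_INR m).
  assert (INR m * (p * p ^ m) * (1 - p) <= INR m * p ^ m * (1 - p)).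
  { apply Rmult_le_compat_r; [lra|]. apply Rmult_le_compat_l; nra. }
  assert (0 <= (1 - p) * (1 - p) * p ^ m) by (apply Rmult_le_pos; nra).
  nra.
Qed.

Lemma Rdiv_le_compat a b c d : 0 <= a <= b -> 0 < d <= c -> a / c <= b / d.
Proof.
  intros Hab Hcd. unfold Rdiv. apply Rmult_le_compat; try lra.
  - apply Rlt_le, Rinv_0_lt_compat; lra.
  - apply Rinv_le_contravar; lra.
Qed.

Lemma Rdiv_le_cross a b c d : 0 < b -> 0 < d -> a * d <= c * b -> a / b <= c / d.
Proof.
  intros Hb Hd H. apply (Rmult_le_reg_r (b * d)); [nra|].
  replace (a / b * (b * d)) with (a * d) by (field; lra).
  replace (c / d * (b * d)) with (c * b) by (field; lra). exact H.
Qed.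

(* Coquelicot's series lemmas, restated on R so that [apply] and [refine] unify them with
   terms written with [Rmult] and [Rplus] rather than [scal] and [plus]. *)
Lemma is_series_scalR (c : R) (a : nat -> R) (l : R) :
  is_series a l -> is_series (fun n => c * a n) (c * l).
Proof. exact (is_series_scal_l c a l). Qed.

Lemma is_series_plusR (a b : nat -> R) (la lb : R) :
  is_series a la -> is_series b lb -> is_series (fun n => a n + b n) (la + lb).
Proof. exact (is_series_plus a b la lb). Qed.

Lemma is_series_minusR (a b : nat -> R) (la lb : R) :
  is_series a la -> is_series b lb -> is_series (fun n => a n - b n) (la - lb).
Proof. exact (@is_series_minus R_AbsRing R_NormedModule a b la lb). Qed.

Lemma is_series_extR (a b : nat -> R) (l l' : R) :
  (forall n, a n = b n) -> l = l' -> is_series a l -> is_series b l'.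
Proof. intros Hab <-. now apply is_series_ext. Qed.

Lemma is_series_incrR (a : nat -> R) (l : R) :
  is_series a l -> is_series (fun k => a (S k)) (l - a O).
Proof.
  intros Ha. apply is_series_incr_1.
  change (plus (l - a O) (a O)) with (l - a O + a O).
  now replace (l - a O + a O) with l by ring.
Qed.

Lemma is_series_decrR (a : nat -> R) (l : R) :
  is_series (fun k => a (S k)) (l - a O) -> is_series a l.
Proof. intros Ha. now apply is_series_decr_1. Qed.

Lemma is_series_leR (a b : nat -> R) (la lb : R) :
  (forall k, a k <= b k) -> is_series a la -> is_series b lb -> la <= lb.
Proof.
  intros Hab Ha Hb.
  apply (is_lim_seq_le (sum_n a) (sum_n b) la lb); [|exact Ha|exact Hb].
  intros n. now apply sum_n_m_le.
Qed.

Lemma Series_weighted_le (w g h : nat -> R) (C l : R) :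
  (forall k, 0 <= w k) -> ex_series w -> (forall k, Rabs (g k) <= C) ->
  (forall k, g k <= h k) -> is_series (fun k => w k * h k) l ->
  Series (fun k => w k * g k) <= l.
Proof.
  intros Hw [lw Hlw] HC Hgh Hl.
  assert (Hwg : ex_series (fun k => w k * g k)).
  { apply (@ex_series_le R_AbsRing R_CompleteNormedModule _ (fun k => C * w k));
      [|exists (C * lw); now apply is_series_scalR].
    intros k. change norm with Rabs. rewrite Rabs_mult, Rabs_pos_eq, Rmult_comm by apply Hw.
    apply Rmult_le_compat_r; auto. }
  destruct Hwg as [lg Hlg]. rewrite (is_series_unique _ _ Hlg).
  apply (is_series_leR _ _ _ _ (fun k => Rmult_le_compat_l _ _ _ (Hw k) (Hgh k)) Hlg Hl).
Qed.

Definition qint (r : R) (m : nat) : R := (1 - r ^ m) / (1 - r).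

Fixpoint qfact (r : R) (m : nat) : R :=
  match m with O => 1 | S m' => qfact r m' * qint r (S m') end.

Definition qbinom (r : R) (n k : nat) : R := qfact r (n + k) / (qfact r k * qfact r n).

Fixpoint qpoch (r : R) (m : nat) (y : R) : R :=
  match m with O => 1 | S m' => qpoch r m' y * (1 - r ^ m' * y) end.

Section QCalculus.
Variable r : R.
Hypotheses (r_gt0 : 0 < r) (r_lt1 : r < 1).

Lemma qint_0 : qint r 0 = 0.
Proof. unfold qint; simpl; field; lra. Qed.

Lemma qint_S m : qint r (S m) = 1 + r * qint r m.
Proof. unfold qint; simpl; field; lra. Qed.

Lemma qint_add a j : qint r (a + j) = qint r j + r ^ j * qint r a.
Proof. unfold qint. rewrite pow_add. field; lra. Qed.

Lemma qint_gt0 m : (0 < m)%nat -> 0 < qint r m.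
Proof.
  intros Hm. apply Rdiv_lt_0_compat; [|lra].
  pose proof (pow_lt_1_compat r m ltac:(lra) Hm). lra.
Qed.

Lemma qint_ge0 m : 0 <= qint r m.
Proof. destruct m; [rewrite qint_0; lra | apply Rlt_le, qint_gt0; lia]. Qed.

Lemma qint_ge1 m : (0 < m)%nat -> 1 <= qint r m.
Proof. intros Hm. destruct m; [lia|]. rewrite qint_S. pose proof (qint_ge0 m). nra. Qed.

Lemma qint_le_INR m : qint r m <= INR m.
Proof.
  induction m as [|m IH]; [rewrite qint_0; simpl; lra|].
  rewrite qint_S, S_INR. pose proof (qint_ge0 m). nra.
Qed.

Lemma qint_le_inv m : qint r m <= / (1 - r).
Proof.
  unfold qint, Rdiv. rewrite <- (Rmult_1_l (/ (1 - r))) at 2.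
  apply Rmult_le_compat_r; [apply Rlt_le, Rinv_0_lt_compat; lra|].
  pose proof (pow_lt r m r_gt0). lra.
Qed.

Lemma qfact_gt0 m : 0 < qfact r m.
Proof.
  induction m as [|m IH]; simpl; [lra|].
  apply Rmult_lt_0_compat; [exact IH | apply qint_gt0; lia].
Qed.

Lemma qpoch_gt0 m y : 0 <= y < 1 -> 0 < qpoch r m y.
Proof.
  intros Hy. induction m as [|m IH]; simpl; [lra|].
  pose proof (pow_le_one r m ltac:(lra)). pose proof (pow_lt r m r_gt0).
  apply Rmult_lt_0_compat; nra.
Qed.

Lemma qpoch_S_shift j y : qpoch r (S j) y = (1 - y) * qpoch r j (r * y).
Proof.
  induction j as [|j IH]; [simpl; ring|].
  change (qpoch r (S (S j)) y) with (qpoch r (S j) y * (1 - r ^ S j * y)).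
  rewrite IH. simpl. ring.
Qed.

Lemma qint_neq0 m : (0 < m)%nat -> qint r m <> 0.
Proof. intros Hm. pose proof (qint_gt0 m Hm). lra. Qed.

Lemma qfact_neq0 m : qfact r m <> 0.
Proof. pose proof (qfact_gt0 m). lra. Qed.

End QCalculus.

Create HintDb qpos.
#[export] Hint Resolve qint_neq0 qfact_neq0 pow_nonzero : qpos.
#[export] Hint Extern 1 (lt _ _) => lia : qpos.
#[export] Hint Extern 1 (_ <> 0) => lra : qpos.

Ltac qfield := field; repeat split; auto with qpos.

Section QBinomial.
Variable r : R.
Hypotheses (r_gt0 : 0 < r) (r_lt1 : r < 1).

Lemma qbinom_0l k : qbinom r 0 k = 1.
Proof. unfold qbinom; simpl. qfield. Qed.

Lemma qbinom_0r n : qbinom r n 0 = 1.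
Proof. unfold qbinom. rewrite Nat.add_0_r; simpl. qfield. Qed.

Lemma qbinom_gt0 n k : 0 < qbinom r n k.
Proof.
  unfold qbinom. pose proof (qfact_gt0 r r_gt0 r_lt1).
  apply Rdiv_lt_0_compat; [|apply Rmult_lt_0_compat]; auto.
Qed.

Lemma qbinom_Sl n k : qbinom r (S n) k = qbinom r n k * qint r (S (n + k)) / qint r (S n).
Proof. unfold qbinom; simpl. qfield. Qed.

Lemma qbinom_Sr_ratio n k : qbinom r n (S k) * qint r (S k) / qint r (n + S k) = qbinom r n k.
Proof. unfold qbinom. rewrite <- plus_n_Sm; simpl. qfield. Qed.

Lemma qbinom_Sl_ratio n k : qbinom r (S n) k / qint r (S n + k) = qbinom r n k / qint r (S n).
Proof. rewrite qbinom_Sl; simpl. qfield. Qed.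

Lemma qbinom_pascal n k : qbinom r (S n) (S k) = r ^ S k * qbinom r n (S k) + qbinom r (S n) k.
Proof.
  unfold qbinom.
  replace (S n + S k)%nat with (S (S (n + k))) by lia.
  replace (n + S k)%nat with (S (n + k)) by lia.
  replace (S n + k)%nat with (S (n + k)) by lia.
  simpl qfact.
  replace (qint r (S (S (n + k)))) with (qint r (S k) + r ^ S k * qint r (S n))
    by (rewrite <- qint_add by lra; f_equal; lia).
  qfield.
Qed.

Lemma qbinom_le n k : qbinom r n k <= (/ (1 - r)) ^ n.
Proof.
  induction n as [|n IH]; [rewrite qbinom_0l; simpl; lra|].
  rewrite qbinom_Sl; simpl.
  pose proof (qint_ge1 r r_gt0 r_lt1 (S n) ltac:(lia)).
  pose proof (qint_le_inv r r_gt0 r_lt1 (S (n + k))).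
  pose proof (qint_gt0 r r_gt0 r_lt1 (S (n + k)) ltac:(lia)).
  pose proof (qbinom_gt0 n k).
  apply (Rle_trans _ (qbinom r n k * qint r (S (n + k)))).
  - unfold Rdiv. rewrite <- (Rmult_1_r (qbinom r n k * qint r (S (n + k)))) at 2.
    apply Rmult_le_compat_l; [nra|]. rewrite <- Rinv_1. apply Rinv_le_contravar; lra.
  - rewrite (Rmult_comm (/ (1 - r))). apply Rmult_le_compat; lra.
Qed.

End QBinomial.

(** * The q-Beta and q-binomial series *)

Section QSeries.
Variable r : R.
Hypotheses (r_gt0 : 0 < r) (r_lt1 : r < 1).

(* A q-analogue of the Beta integral B(a+1, n+1). *)
Lemma qbeta_series n : forall a,
  is_series (fun j => (r ^ S a) ^ j * qpoch r n (r ^ S j))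
    (qfact r a * qfact r n / ((1 - r) * qfact r (S (a + n)))).
Proof.
  induction n as [|n IH]; intros a.
  - pose proof (pow_lt_1_compat r (S a) ltac:(lra) ltac:(lia)). pose proof (pow_lt r (S a) r_gt0).
    apply (is_series_extR (fun j => (r ^ S a) ^ j) _ (/ (1 - r ^ S a))).
    + intros j; simpl; ring.
    + rewrite Nat.add_0_r; simpl qfact. unfold qint. qfield.
    + apply is_series_geom. rewrite Rabs_pos_eq; lra.
  - refine (is_series_extR _ _ _ _ _ _
      (is_series_minusR _ _ _ _ (IH a) (is_series_scalR (r ^ S n) _ _ (IH (S a))))).
    + intros j. simpl qpoch. replace (r ^ S (S a)) with (r * r ^ S a) by reflexivity.
      rewrite Rpow_mult_distr. simpl. ring.
    + assert (E : qint r (S (S (a + n))) - r ^ S n * qint r (S a) = qint r (S n)).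
      { replace (S (S (a + n))) with (S a + S n)%nat by lia. rewrite qint_add by lra. ring. }
      rewrite Nat.add_succ_r. simpl plus. simpl qfact. rewrite <- E. qfield.
Qed.

Lemma qbinom_series m : forall y, 0 <= y < 1 ->
  is_series (fun k => qbinom r m k * y ^ k) (/ qpoch r (S m) y).
Proof.
  induction m as [|m IH]; intros y Hy.
  - apply (is_series_extR (fun k => y ^ k) _ (/ (1 - y))).
    + intros k. rewrite qbinom_0l by lra. ring.
    + simpl. f_equal. ring.
    + apply is_series_geom. rewrite Rabs_pos_eq; lra.
  - set (u := fun k => qbinom r (S m) k * y ^ k).
    assert (Hu : ex_series u).
    { apply (@ex_series_le R_AbsRing R_CompleteNormedModule _
               (fun k => (/ (1 - r)) ^ S m * y ^ k)).
      - intros k. unfold u. change norm with Rabs.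
        pose proof (qbinom_gt0 r r_gt0 r_lt1 (S m) k). pose proof (pow_le y k (proj1 Hy)).
        rewrite Rabs_pos_eq by nra.
        apply Rmult_le_compat_r; [lra | apply qbinom_le; lra].
      - eexists. apply is_series_scalR, is_series_geom. rewrite Rabs_pos_eq; lra. }
    destruct Hu as [l Hl]. change R in l.
    assert (Hry : 0 <= r * y < 1) by nra.
    (* Pascal's rule splits the tail of u into the series for r y and y times u. *)
    assert (Hshift : is_series (fun k => u (S k))
                       (/ qpoch r (S m) (r * y) - qbinom r m 0 * (r * y) ^ 0 + y * l)).
    { refine (is_series_extR _ _ _ _ _ eq_refl
        (is_series_plusR _ _ _ _ (is_series_incrR _ _ (IH (r * y) Hry))
                                 (is_series_scalR y _ _ Hl))).
      intros k. unfold u. rewrite qbinom_pascal by lra. rewrite Rpow_mult_distr. simpl. ring. }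
    pose proof (is_series_unique _ _ (is_series_incrR _ _ Hl)) as E1.
    rewrite (is_series_unique _ _ Hshift) in E1. unfold u in E1.
    rewrite !qbinom_0r, !pow_O in E1 by lra.
    replace (/ qpoch r (S (S m)) y) with l; [exact Hl|].
    assert (E : / qpoch r (S m) (r * y) = l * (1 - y)) by lra.
    rewrite qpoch_S_shift, Rinv_mult, E. field. lra.
Qed.

End QSeries.

(** * The weights and their factorial moments *)

(* [weight r x n k] is m_{n,k}^{(p, p r)}(x), see [m_nk_weight]. *)
Definition weight (r x : R) (n k : nat) : R := qbinom r n k * x ^ k * qpoch r (S n) x.

Section Weights.
Variables r x : R.
Hypotheses (r_gt0 : 0 < r) (r_lt1 : r < 1) (x_ge0 : 0 <= x) (x_lt1 : x < 1).

Lemma weight_ge0 n k : 0 <= weight r x n k.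
Proof.
  unfold weight. pose proof (qbinom_gt0 r r_gt0 r_lt1 n k).
  pose proof (qpoch_gt0 r r_gt0 r_lt1 (S n) x (conj x_ge0 x_lt1)). pose proof (pow_le x k x_ge0).
  apply Rmult_le_pos; [apply Rmult_le_pos|]; lra.
Qed.

Lemma weight_series n : is_series (weight r x n) 1.
Proof.
  pose proof (qpoch_gt0 r r_gt0 r_lt1 (S n) x (conj x_ge0 x_lt1)).
  apply (is_series_extR (fun k => qpoch r (S n) x * (qbinom r n k * x ^ k)) _
           (qpoch r (S n) x * / qpoch r (S n) x)).
  - intros k; unfold weight; ring.
  - field; lra.
  - apply is_series_scalR, qbinom_series; auto.
Qed.

Lemma is_series_weight_scal n c (a : nat -> R) :
  (forall k, a k = c * weight r x n k) -> is_series a c.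
Proof.
  intros Ha. apply (is_series_extR (fun k => c * weight r x n k) _ (c * 1)); [|ring|].
  - intros k; now rewrite Ha.
  - apply is_series_scalR, weight_series.
Qed.

Lemma weight_series_frac1 n :
  is_series (fun k => weight r x n k * (qint r k / qint r (n + k))) x.
Proof.
  apply is_series_decrR. rewrite qint_0, Rdiv_0_l, Rmult_0_r, Rminus_0_r by lra.
  apply (is_series_weight_scal n).
  intros k. unfold weight. rewrite <- (qbinom_Sr_ratio r r_gt0 r_lt1 n k). simpl. qfield.
Qed.

Lemma weight_series_inv1 n :
  is_series (fun k => weight r x (S n) k / qint r (S n + k)) ((1 - r ^ S n * x) / qint r (S n)).
Proof.
  apply (is_series_weight_scal n). intros k. unfold weight.
  replace (qbinom r (S n) k * x ^ k * qpoch r (S (S n)) x / qint r (S n + k))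
    with (qbinom r (S n) k / qint r (S n + k) * x ^ k * qpoch r (S (S n)) x)
    by (unfold Rdiv; ring).
  rewrite qbinom_Sl_ratio by lra. simpl. qfield.
Qed.

Lemma weight_series_frac2 n :
  is_series (fun k => weight r x n k *
    (qint r k * qint r (k - 1) / (qint r (n + k) * qint r (n + k - 1)))) (x ^ 2).
Proof.
  apply is_series_decrR. rewrite qint_0 by lra.
  rewrite Rmult_0_l, Rdiv_0_l, Rmult_0_r, Rminus_0_r.
  apply is_series_decrR. rewrite Nat.sub_diag, qint_0 by lra.
  rewrite Rmult_0_r, Rdiv_0_l, Rmult_0_r, Rminus_0_r.
  apply (is_series_weight_scal n). intros k. unfold weight.
  replace (S (S k) - 1)%nat with (S k) by lia.
  replace (n + S (S k) - 1)%nat with (n + S k)%nat by lia.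
  rewrite <- (qbinom_Sr_ratio r r_gt0 r_lt1 n k), <- (qbinom_Sr_ratio r r_gt0 r_lt1 n (S k)).
  simpl. qfield.
Qed.

Lemma weight_series_mixed2 n :
  is_series (fun k => weight r x (S n) k * (qint r k / (qint r (S n + k) * qint r (n + k))))
    (x * (1 - r ^ S n * x) / qint r (S n)).
Proof.
  apply is_series_decrR. rewrite qint_0, Rdiv_0_l, Rmult_0_r, Rminus_0_r by lra.
  apply (is_series_weight_scal n). intros k. unfold weight.
  replace (n + S k)%nat with (S n + k)%nat by lia.
  replace (qbinom r (S n) (S k) * x ^ S k * qpoch r (S (S n)) x *
             (qint r (S k) / (qint r (S n + S k) * qint r (S n + k))))
    with (qbinom r (S n) (S k) * qint r (S k) / qint r (S n + S k) / qint r (S n + k)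
            * x ^ S k * qpoch r (S (S n)) x) by qfield.
  rewrite qbinom_Sr_ratio, qbinom_Sl_ratio by lra. simpl. qfield.
Qed.

Lemma weight_series_inv2 n :
  is_series (fun k => weight r x (S (S n)) k / (qint r (S (S n) + k) * qint r (S n + k)))
    ((1 - r ^ S n * x) * (1 - r ^ S (S n) * x) / (qint r (S (S n)) * qint r (S n))).
Proof.
  apply (is_series_weight_scal n). intros k. unfold weight.
  replace (qbinom r (S (S n)) k * x ^ k * qpoch r (S (S (S n))) x /
             (qint r (S (S n) + k) * qint r (S n + k)))
    with (qbinom r (S (S n)) k / qint r (S (S n) + k) / qint r (S n + k)
            * x ^ k * qpoch r (S (S (S n))) x) by qfield.
  rewrite qbinom_Sl_ratio by lra.
  replace (qbinom r (S n) k / qint r (S (S n)) / qint r (S n + k))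
    with (qbinom r (S n) k / qint r (S n + k) / qint r (S (S n))) by qfield.
  rewrite qbinom_Sl_ratio by lra. simpl. qfield.
Qed.

End Weights.

(** * Termwise bounds on the kernel means *)

(* [kernel_mean r n k / p] is the mean of t for the measure b_{n,k}^{(p, p r)}(qt) d_{p,q}t on
   [0, 1], see [pq_integral_b_nk]. *)
Definition kernel_mean (r : R) (n k : nat) : R := qint r (S k) / qint r (n + S (S k)).

Section KernelMean.
Variable r : R.
Hypotheses (r_gt0 : 0 < r) (r_lt1 : r < 1).

Lemma qint_le_add a j : qint r a <= qint r (a + j).
Proof.
  rewrite Nat.add_comm, qint_add by lra.
  pose proof (qint_ge0 r r_gt0 r_lt1 j). pose proof (pow_lt r a r_gt0). nra.
Qed.

Lemma qint_add_ge a j : r ^ j * qint r a <= qint r (a + j).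
Proof. rewrite qint_add by lra. pose proof (qint_ge0 r r_gt0 r_lt1 j). lra. Qed.

Lemma kernel_mean_bounds n k : 0 <= kernel_mean r n k <= 1.
Proof.
  unfold kernel_mean.
  pose proof (qint_gt0 r r_gt0 r_lt1 (S k) ltac:(lia)).
  pose proof (qint_le_add (S k) (S n)). replace (S k + S n)%nat with (n + S (S k))%nat in * by lia.
  split; [apply Rlt_le, Rdiv_lt_0_compat; lra|].
  rewrite <- (Rdiv_diag (qint r (n + S (S k)))) by lra. apply Rdiv_le_compat; lra.
Qed.

Lemma kernel_mean_le n k :
  kernel_mean r (S n) k <= 1 / (r ^ 2 * qint r (S n + k)) + qint r k / (r * qint r (S n + k)).
Proof.
  pose proof (qint_gt0 r r_gt0 r_lt1 (S n + k) ltac:(lia)).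
  pose proof (pow_lt r 2 r_gt0).
  replace (1 / (r ^ 2 * qint r (S n + k)) + qint r k / (r * qint r (S n + k)))
    with (qint r (S k) / (r ^ 2 * qint r (S n + k))) by (rewrite qint_S by lra; qfield).
  unfold kernel_mean. replace (S n + S (S k))%nat with (S n + k + 2)%nat by lia.
  pose proof (qint_add_ge (S n + k) 2).
  apply Rdiv_le_compat; [split; [apply qint_ge0|]; lra | nra].
Qed.

Lemma qint_cross m k :
  qint r (m + 2) * qint r (m + k + 2) - qint r m * qint r (m + k + 4)
  = qint r 2 * r ^ m * qint r (k + 2).
Proof. unfold qint. rewrite !pow_add. field. lra. Qed.

Lemma kernel_mean_ge m k :
  qint r m / qint r (S (S m)) * (qint r k / qint r (S (S m) + k)) <= kernel_mean r (S (S m)) k.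
Proof.
  unfold kernel_mean.
  replace (S (S m)) with (m + 2)%nat by lia. replace (m + 2 + k)%nat with (m + k + 2)%nat by lia.
  replace (m + 2 + S (S k))%nat with (m + k + 4)%nat by lia.
  pose proof (qint_cross m k).
  pose proof (qint_gt0 r r_gt0 r_lt1 2 ltac:(lia)). pose proof (qint_ge0 r r_gt0 r_lt1 (k + 2)).
  pose proof (qint_gt0 r r_gt0 r_lt1 (m + 2) ltac:(lia)).
  pose proof (qint_gt0 r r_gt0 r_lt1 (m + k + 2) ltac:(lia)).
  pose proof (qint_gt0 r r_gt0 r_lt1 (m + k + 4) ltac:(lia)).
  pose proof (qint_ge0 r r_gt0 r_lt1 m). pose proof (qint_ge0 r r_gt0 r_lt1 k).
  pose proof (qint_le_add k 1). rewrite Nat.add_1_r in *.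
  pose proof (pow_lt r m r_gt0).
  assert (0 <= qint r 2 * r ^ m * qint r (k + 2)) by (apply Rmult_le_pos; nra).
  replace (qint r m / qint r (m + 2) * (qint r k / qint r (m + k + 2)))
    with (qint r m * qint r k / (qint r (m + 2) * qint r (m + k + 2))) by qfield.
  apply Rdiv_le_cross; [nra | lra |].
  replace (qint r m * qint r k * qint r (m + k + 4))
    with (qint r k * (qint r m * qint r (m + k + 4))) by ring.
  apply Rmult_le_compat; nra.
Qed.

Lemma qint_S_mul_SS k :
  qint r (S k) * qint r (S (S k))
  = (1 + r) + r * (1 + r) ^ 2 * qint r k + r ^ 4 * (qint r k * qint r (k - 1)).
Proof.
  destruct k as [|k]; [rewrite !qint_S, qint_0 by lra; simpl; ring|].
  rewrite Nat.sub_succ, Nat.sub_0_r, !(qint_S r r_lt1 (S _)), (qint_S r r_lt1 k). ring.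
Qed.

Lemma kernel_mean_mul_le m k :
  kernel_mean r (S (S m)) k * kernel_mean r (S (S m)) (S k) <=
  ((1 + r) / r ^ 6 + (1 + r) ^ 2 / r ^ 5 * qint r k + 1 / r ^ 2 * (qint r k * qint r (k - 1)))
  / (qint r (S (S m) + k) * qint r (S m + k)).
Proof.
  unfold kernel_mean.
  pose proof (qint_gt0 r r_gt0 r_lt1 (S (S m) + k) ltac:(lia)).
  pose proof (qint_gt0 r r_gt0 r_lt1 (S m + k) ltac:(lia)).
  pose proof (pow_lt r 2 r_gt0). pose proof (pow_lt r 4 r_gt0).
  replace ((1 + r) / r ^ 6 + (1 + r) ^ 2 / r ^ 5 * qint r k
           + 1 / r ^ 2 * (qint r k * qint r (k - 1)))
    with (qint r (S k) * qint r (S (S k)) / (r ^ 2 * r ^ 4))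
    by (rewrite qint_S_mul_SS; simpl; field; lra).
  replace (S (S m) + S (S k))%nat with (S (S m) + k + 2)%nat by lia.
  replace (S (S m) + S (S (S k)))%nat with (S m + k + 4)%nat by lia.
  pose proof (qint_add_ge (S (S m) + k) 2). pose proof (qint_add_ge (S m + k) 4).
  replace (qint r (S k) / qint r (S (S m) + k + 2) * (qint r (S (S k)) / qint r (S m + k + 4)))
    with (qint r (S k) * qint r (S (S k)) / (qint r (S (S m) + k + 2) * qint r (S m + k + 4)))
    by qfield.
  replace (qint r (S k) * qint r (S (S k)) / (r ^ 2 * r ^ 4)
             / (qint r (S (S m) + k) * qint r (S m + k)))
    with (qint r (S k) * qint r (S (S k)) /
            (r ^ 2 * qint r (S (S m) + k) * (r ^ 4 * qint r (S m + k)))) by qfield.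
  pose proof (qint_ge0 r r_gt0 r_lt1 (S k)). pose proof (qint_ge0 r r_gt0 r_lt1 (S (S k))).
  apply Rdiv_le_compat; split.
  - apply Rmult_le_pos; lra.
  - lra.
  - apply Rmult_lt_0_compat; apply Rmult_lt_0_compat; lra.
  - apply Rmult_le_compat; auto; apply Rmult_le_pos; lra.
Qed.

End KernelMean.

(** * The operator for q = p r *)

Fixpoint tri (m : nat) : nat := match m with O => O | S m' => (tri m' + m')%nat end.

Lemma tri_add a b : tri (a + b) = (tri a + tri b + a * b)%nat.
Proof.
  induction b as [|b IH]; [rewrite Nat.add_0_r; simpl; lia|].
  rewrite Nat.add_succ_r; simpl. rewrite IH. lia.
Qed.

Lemma tri_div2 m : (m * (m - 1) / 2)%nat = tri m.
Proof.
  assert (E : (tri m * 2 = m * (m - 1))%nat).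
  { induction m as [|m IH]; [reflexivity|]. simpl tri. destruct m; [reflexivity|]. nia. }
  rewrite <- E. apply Nat.div_mul. lia.
Qed.

Section PQtoQ.
Variables p r : R.
Hypotheses (p_gt0 : 0 < p) (r_gt0 : 0 < r) (r_lt1 : r < 1).

Lemma pq_int_S m : pq_int p (p * r) (S m) = p ^ m * qint r (S m).
Proof.
  unfold pq_int, qint. rewrite Rpow_mult_distr.
  assert (p - p * r <> 0) by nra. simpl. field. lra.
Qed.

Lemma pq_fact_q m : pq_fact p (p * r) m = p ^ tri m * qfact r m.
Proof.
  induction m as [|m IH]; [simpl; ring|].
  simpl pq_fact. rewrite IH, pq_int_S. simpl tri. rewrite pow_add. simpl qfact. ring.
Qed.

Lemma pq_binom_q n k : pq_binom p (p * r) (n + k) k = p ^ (n * k) * qbinom r n k.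
Proof.
  unfold pq_binom, qbinom. replace (n + k - k)%nat with n by lia.
  rewrite !pq_fact_q, tri_add, !pow_add. qfield.
Qed.

Lemma pq_pow_q m y : pq_pow p (p * r) 1 (- y) m = p ^ tri m * qpoch r m y.
Proof.
  induction m as [|m IH]; [simpl; ring|].
  simpl pq_pow. rewrite IH. simpl tri. rewrite pow_add, Rpow_mult_distr. simpl qpoch. ring.
Qed.

Lemma m_nk_weight n k x : m_nk p (p * r) (S n) k x = weight r x (S n) k.
Proof.
  unfold m_nk, weight.
  replace (S n * (S n + 1))%nat with (S (S n) * (S (S n) - 1))%nat by lia.
  rewrite tri_div2, pq_binom_q, Nat.add_1_r, pq_pow_q, (Nat.mul_comm k), !pow_add. qfield.
Qed.

Lemma b_nk_q n k t :
  b_nk p (p * r) (S n) k t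
  = p ^ (2 * k) * qbinom r (S (S n)) k * (p * r * t) ^ k * qpoch r (S n) (p * r * t).
Proof.
  unfold b_nk.
  rewrite tri_div2. replace (S n - 1)%nat with n by lia.
  replace (S n + k + 1)%nat with (S (S n) + k)%nat by lia.
  rewrite pq_binom_q, pq_pow_q.
  replace (S (S n) * k)%nat with (k * n + 2 * k)%nat by lia.
  rewrite !pow_add. qfield.
Qed.

Lemma pq_node j : (p * r) ^ j / p ^ S j * 1 = r ^ j / p.
Proof. rewrite Rpow_mult_distr. simpl. qfield. Qed.

Lemma pq_integral_b_nk n k c0 c1 c2 (f : R -> R) :
  (forall t, f t = c0 + c1 * t + c2 * t ^ 2) ->
  pq_integral p (p * r) 1 (fun t => b_nk p (p * r) (S n) k t * f t)
  = (p * (p * r)) ^ k / qint r (S (S n)) *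
    (c0 + c1 * kernel_mean r (S n) k / p
     + c2 * (kernel_mean r (S n) k * kernel_mean r (S n) (S k)) / p ^ 2).
Proof.
  intros Hf. unfold pq_integral.
  set (B a := qfact r a * qfact r (S n) / ((1 - r) * qfact r (S (a + S n)))).
  set (C := p ^ (2 * k) * qbinom r (S (S n)) k * r ^ k / p).
  assert (Hser : is_series
    (fun j => (p * r) ^ j / p ^ S j *
              (b_nk p (p * r) (S n) k ((p * r) ^ j / p ^ S j * 1) * f ((p * r) ^ j / p ^ S j * 1)))
    (C * (c0 * B k + c1 / p * B (S k) + c2 / p ^ 2 * B (S (S k))))).
  { refine (is_series_extR _ _ _ _ _ eq_refl (is_series_scalR C _ _
      (is_series_plusR _ _ _ _ (is_series_plusR _ _ _ _
        (is_series_scalR c0 _ _ (qbeta_series r r_gt0 r_lt1 (S n) k))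
        (is_series_scalR (c1 / p) _ _ (qbeta_series r r_gt0 r_lt1 (S n) (S k))))
        (is_series_scalR (c2 / p ^ 2) _ _ (qbeta_series r r_gt0 r_lt1 (S n) (S (S k))))))).
    intros j.
    assert (Hqt : p * r * (r ^ j / p) = r ^ S j) by (simpl; qfield).
    assert (Hpow : forall a, (r ^ S a) ^ j = r ^ j * (r ^ a) ^ j)
      by (intros a; simpl; apply Rpow_mult_distr).
    assert (Hswap : (r ^ S j) ^ k = r ^ k * (r ^ k) ^ j).
    { simpl. rewrite Rpow_mult_distr, <- !pow_mult, Nat.mul_comm. reflexivity. }
    rewrite pq_node, b_nk_q, Hf, Hqt, Hswap, !Hpow.
    replace ((p * r) ^ j / p ^ S j) with (r ^ j / p) by (rewrite <- pq_node; ring).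
    unfold C. simpl. qfield. }
  rewrite (is_series_unique _ _ Hser). unfold C, B, kernel_mean, qbinom.
  replace (S (S k) + S n)%nat with (S (S (k + S n))) by lia.
  replace (S k + S n)%nat with (S (k + S n)) by lia.
  replace (S (S n) + k)%nat with (S (k + S n)) by lia.
  replace (S n + S (S k))%nat with (S (S (k + S n))) by lia.
  replace (S n + S (S (S k)))%nat with (S (S (S (k + S n)))) by lia.
  replace (2 * k)%nat with (k + k)%nat by lia.
  rewrite !Rpow_mult_distr, pow_add. simpl qfact. qfield.
Qed.

Lemma Mop_quadratic n c0 c1 c2 (f : R -> R) x : 0 <= x < 1 ->
  (forall t, f t = c0 + c1 * t + c2 * t ^ 2) ->
  Mop p (p * r) (S n) f x
  = Series (fun k => weight r x (S n) k *
      (c0 + c1 * kernel_mean r (S n) k / p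
       + c2 * (kernel_mean r (S n) k * kernel_mean r (S n) (S k)) / p ^ 2)).
Proof.
  intros Hx Hf. unfold Mop. destruct (Rlt_dec x 1) as [_|]; [|lra].
  set (g k := weight r x (S n) k *
      (c0 + c1 * kernel_mean r (S n) k / p
       + c2 * (kernel_mean r (S n) k * kernel_mean r (S n) (S k)) / p ^ 2)).
  rewrite (Series_ext _ (fun k => / qint r (S (S n)) * g k)).
  - rewrite Series_scal_l, pq_int_S. qfield.
  - intros k. rewrite m_nk_weight, (pq_integral_b_nk n k c0 c1 c2 f Hf). unfold g.
    assert (0 < p * (p * r)) by (apply Rmult_lt_0_compat; nra). qfield.
Qed.

End PQtoQ.

(* Controls the coefficient of x^2 in the second estimate. *)
Lemma pow_qint_bound p r m : 0 < p <= 1 -> 0 < r < 1 ->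
  p ^ S m * (qint r (S (S m)) - p * r ^ 2 * qint r m) <= 1 + p * r.
Proof.
  intros Hp Hr.
  rewrite (qint_S r ltac:(lra) (S m)), (qint_S r ltac:(lra) m).
  pose proof (qint_ge0 r ltac:(lra) ltac:(lra) m).
  pose proof (qint_le_INR r ltac:(lra) ltac:(lra) m).
  pose proof (Bernoulli_pow_ineq p m Hp). pose proof (pos_INR m).
  pose proof (pow_lt p m ltac:(lra)). pose proof (pow_le_one p m ltac:(lra)).
  simpl pow. set (P := p ^ m) in *. set (t := qint r m) in *.
  assert (Ht : P * (1 - p) * t <= 1 - P).
  { apply Rle_trans with (INR m * P * (1 - p)); [|lra].
    replace (INR m * P * (1 - p)) with (P * (1 - p) * INR m) by ring.
    apply Rmult_le_compat_l; nra. }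
  assert (p * (r * r) * (P * (1 - p) * t) <= p * (r * r) * (1 - P))
    by (apply Rmult_le_compat_l; [nra | exact Ht]).
  assert (0 <= p * r * (1 - r) * (1 - P)) by (repeat apply Rmult_le_pos; lra).
  assert (p * P <= 1) by nra.
  nra.
Qed.

Section Estimates.
Variables p r x : R.
Hypotheses (p_gt0 : 0 < p) (p_le1 : p <= 1) (r_gt0 : 0 < r) (r_lt1 : r < 1).
Hypotheses (x_ge0 : 0 <= x) (x_lt1 : x < 1).

Lemma Mop_psi1_le_lt1 n :
  Mop p (p * r) (S n) (fun t => t - x) x
  <= (p ^ S n - (p * r) ^ S n * x) / ((p * r) ^ 2 * pq_int p (p * r) (S n)) + (1 / (p * r) - 1) * x.
Proof.
  rewrite (Mop_quadratic p r p_gt0 r_gt0 r_lt1 n (- x) 1 0); [| lra | intros; ring].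
  set (w := weight r x (S n)).
  pose proof (weight_ge0 r x r_gt0 r_lt1 x_ge0 x_lt1 (S n)) as Hw.
  pose proof (qint_gt0 r r_gt0 r_lt1 (S n) ltac:(lia)).
  assert (Hip : 0 < / p) by (apply Rinv_0_lt_compat; lra).
  apply Rle_trans with
    (- x + 1 / (p * r ^ 2) * ((1 - r ^ S n * x) / qint r (S n)) + 1 / (p * r) * x).
  - apply (Series_weighted_le w _
      (fun k => - x + (1 / (r ^ 2 * qint r (S n + k)) + qint r k / (r * qint r (S n + k))) / p)
      (x + 1 / p)); auto.
    + eexists. apply weight_series; auto.
    + intros k. pose proof (kernel_mean_bounds r r_gt0 r_lt1 (S n) k).
      assert (0 <= kernel_mean r (S n) k / p <= 1 / p)
        by (unfold Rdiv; split; [apply Rmult_le_pos|apply Rmult_le_compat_r]; lra).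
      apply Rabs_le. lra.
    + intros k. pose proof (kernel_mean_le r r_gt0 r_lt1 n k).
      assert (kernel_mean r (S n) k / p
              <= (1 / (r ^ 2 * qint r (S n + k)) + qint r k / (r * qint r (S n + k))) / p)
        by (unfold Rdiv; apply Rmult_le_compat_r; lra).
      lra.
    + refine (is_series_extR _ _ _ _ _ _ (is_series_plusR _ _ _ _ (is_series_plusR _ _ _ _
        (is_series_scalR (- x) _ _ (weight_series r x r_gt0 r_lt1 x_ge0 x_lt1 (S n)))
        (is_series_scalR (1 / (p * r ^ 2)) _ _ (weight_series_inv1 r x r_gt0 r_lt1 x_ge0 x_lt1 n)))
        (is_series_scalR (1 / (p * r)) _ _
           (weight_series_frac1 r x r_gt0 r_lt1 x_ge0 x_lt1 (S n))))).
      * intros k. pose proof (qint_gt0 r r_gt0 r_lt1 (S n + k) ltac:(lia)). unfold w. qfield.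
      * ring.
  - right. rewrite pq_int_S, !Rpow_mult_distr by lra. simpl. qfield.
Qed.

Definition psi2_majorant (m k : nat) : R :=
  x ^ 2 - 2 * x / p * (qint r m / qint r (S (S m)) * (qint r k / qint r (S (S m) + k)))
  + 1 / p ^ 2 * (((1 + r) / r ^ 6 + (1 + r) ^ 2 / r ^ 5 * qint r k
                  + 1 / r ^ 2 * (qint r k * qint r (k - 1)))
                 / (qint r (S (S m) + k) * qint r (S m + k))).

Definition psi2_majorant_sum (m : nat) : R :=
  x ^ 2 - 2 * x / p * (qint r m / qint r (S (S m))) * x
  + 1 / p ^ 2 * ((1 + r) / r ^ 6 * ((1 - r ^ S m * x) * (1 - r ^ S (S m) * x)
                                    / (qint r (S (S m)) * qint r (S m)))
                 + (1 + r) ^ 2 / r ^ 5 * (x * (1 - r ^ S (S m) * x) / qint r (S (S m)))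
                 + 1 / r ^ 2 * x ^ 2).

Lemma psi2_integrand_le m k :
  let a := kernel_mean r (S (S m)) in
  x ^ 2 + - 2 * x * a k / p + 1 * (a k * a (S k)) / p ^ 2 <= psi2_majorant m k.
Proof.
  intros a. unfold psi2_majorant.
  pose proof (kernel_mean_ge r r_gt0 r_lt1 m k). pose proof (kernel_mean_mul_le r r_gt0 r_lt1 m k).
  fold (a k) (a (S k)) in *.
  assert (0 <= 2 * x / p) by (apply Rdiv_le_0_compat; lra).
  assert (0 < 1 / p ^ 2) by (apply Rdiv_lt_0_compat; [lra | apply pow_lt; lra]).
  assert (2 * x / p * (qint r m / qint r (S (S m)) * (qint r k / qint r (S (S m) + k)))
          <= 2 * x / p * a k) by (apply Rmult_le_compat_l; lra).
  match goal with H : a k * a (S k) <= ?U |- _ =>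
    assert (1 / p ^ 2 * (a k * a (S k)) <= 1 / p ^ 2 * U) by (apply Rmult_le_compat_l; lra) end.
  unfold Rdiv in *. lra.
Qed.

Lemma weight_series_psi2_majorant m :
  is_series (fun k => weight r x (S (S m)) k * psi2_majorant m k) (psi2_majorant_sum m).
Proof.
  refine (is_series_extR _ _ _ _ _ _ (is_series_plusR _ _ _ _ (is_series_plusR _ _ _ _
    (is_series_plusR _ _ _ _ (is_series_plusR _ _ _ _
      (is_series_scalR (x ^ 2) _ _ (weight_series r x r_gt0 r_lt1 x_ge0 x_lt1 (S (S m))))
      (is_series_scalR (- 2 * x / p * (qint r m / qint r (S (S m)))) _ _
         (weight_series_frac1 r x r_gt0 r_lt1 x_ge0 x_lt1 (S (S m)))))
      (is_series_scalR (1 / p ^ 2 * ((1 + r) / r ^ 6)) _ _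
         (weight_series_inv2 r x r_gt0 r_lt1 x_ge0 x_lt1 m)))
      (is_series_scalR (1 / p ^ 2 * ((1 + r) ^ 2 / r ^ 5)) _ _
         (weight_series_mixed2 r x r_gt0 r_lt1 x_ge0 x_lt1 (S m))))
      (is_series_scalR (1 / p ^ 2 * (1 / r ^ 2)) _ _
         (weight_series_frac2 r x r_gt0 r_lt1 x_ge0 x_lt1 (S (S m)))))).
  - intros k. unfold psi2_majorant. replace (S (S m) + k - 1)%nat with (S m + k)%nat by lia.
    pose proof (qint_gt0 r r_gt0 r_lt1 (S (S m) + k) ltac:(lia)).
    pose proof (qint_gt0 r r_gt0 r_lt1 (S m + k) ltac:(lia)).
    qfield.
  - unfold psi2_majorant_sum, Rdiv. ring.
Qed.

Lemma psi2_majorant_sum_le m :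
  psi2_majorant_sum m
  <= x ^ 2 * (1 - 1 / (p * r) ^ 2 + 2 * (p * r + 1) / ((p * r) ^ 2 * pq_int p (p * r) (S (S m))))
     + (p + p * r) ^ 2 / (p * r) ^ 5
       * ((p ^ S (S m) - (p * r) ^ S (S m) * x) / pq_int p (p * r) (S (S m))) * x
     + p * (p + p * r) / (p * r) ^ 6 *
       ((p ^ S (S m) - (p * r) ^ S (S m) * x) * (p ^ S m - (p * r) ^ S m * x)
        / (pq_int p (p * r) (S (S m)) * pq_int p (p * r) (S m))).
Proof.
  unfold psi2_majorant_sum. rewrite !pq_int_S, !Rpow_mult_distr by lra.
  pose proof (qint_gt0 r r_gt0 r_lt1 (S (S m)) ltac:(lia)).
  pose proof (qint_gt0 r r_gt0 r_lt1 (S m) ltac:(lia)).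
  pose proof (pow_lt p m p_gt0). pose proof (pow_lt p 3 p_gt0). pose proof (pow_lt r 2 r_gt0).
  pose proof (pow_qint_bound p r m (conj p_gt0 p_le1) (conj r_gt0 r_lt1)).
  set (K := 2 * (1 + p * r - p ^ S m * (qint r (S (S m)) - p * r ^ 2 * qint r m))
            / (p ^ 3 * r ^ 2 * p ^ m * qint r (S (S m)))).
  assert (HK : 0 <= K).
  { apply Rdiv_le_0_compat; [lra|]. apply Rmult_lt_0_compat; [|lra].
    apply Rmult_lt_0_compat; [apply Rmult_lt_0_compat|]; lra. }
  match goal with |- ?L <= ?R => assert (E : R - L = x ^ 2 * K) end.
  { unfold K. simpl. field. repeat split; lra. }
  pose proof (Rmult_le_pos _ _ (pow2_ge_0 x) HK). lra.
Qed.

Lemma Mop_psi2_le_lt1 m :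
  Mop p (p * r) (S (S m)) (fun t => (t - x) ^ 2) x
  <= x ^ 2 * (1 - 1 / (p * r) ^ 2 + 2 * (p * r + 1) / ((p * r) ^ 2 * pq_int p (p * r) (S (S m))))
     + (p + p * r) ^ 2 / (p * r) ^ 5
       * ((p ^ S (S m) - (p * r) ^ S (S m) * x) / pq_int p (p * r) (S (S m))) * x
     + p * (p + p * r) / (p * r) ^ 6 *
       ((p ^ S (S m) - (p * r) ^ S (S m) * x) * (p ^ S m - (p * r) ^ S m * x)
        / (pq_int p (p * r) (S (S m)) * pq_int p (p * r) (S m))).
Proof.
  rewrite (Mop_quadratic p r p_gt0 r_gt0 r_lt1 (S m) (x ^ 2) (- 2 * x) 1); [| lra | intros; ring].
  eapply Rle_trans; [|apply psi2_majorant_sum_le].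
  apply (Series_weighted_le _ _ (psi2_majorant m) (1 + 2 / p + 1 / p ^ 2)).
  - apply weight_ge0; auto.
  - eexists. apply weight_series; auto.
  - intros k. cbv beta. pose proof (kernel_mean_bounds r r_gt0 r_lt1 (S (S m)) k).
    pose proof (kernel_mean_bounds r r_gt0 r_lt1 (S (S m)) (S k)).
    set (a := kernel_mean r (S (S m)) k) in *. set (b := kernel_mean r (S (S m)) (S k)) in *.
    assert (Hip : 0 < / p) by (apply Rinv_0_lt_compat; lra).
    assert (0 <= x * a <= 1) by (split; nra). assert (0 <= a * b <= 1) by (split; nra).
    assert (0 <= x * a * / p <= / p) by (split; nra).
    assert (0 <= a * b * (/ p * / p) <= / p * / p) by (split; nra).
    apply Rabs_le. unfold Rdiv. replace (/ p ^ 2) with (/ p * / p) by (simpl; field; lra).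
    nra.
  - apply psi2_integrand_le.
  - apply weight_series_psi2_majorant.
Qed.

End Estimates.

Section PQBounds.
Variables p q : R.
Hypotheses (q_gt0 : 0 < q) (q_lt_p : q < p).

Lemma pq_int_S_rec k : pq_int p q (S k) = p ^ k + q * pq_int p q k.
Proof. unfold pq_int. simpl. field. lra. Qed.

Lemma pq_int_gt0 n : (0 < n)%nat -> 0 < pq_int p q n.
Proof.
  intros Hn. apply Rdiv_lt_0_compat; [|lra].
  destruct n as [|n]; [lia|]. simpl.
  pose proof (pow_incr q p n ltac:(lra)). pose proof (pow_lt q n q_gt0). nra.
Qed.

Lemma pq_pow_diff_ge0 n y : 0 <= y <= 1 -> 0 <= p ^ n - q ^ n * y.
Proof.
  intros Hy. pose proof (pow_incr q p n ltac:(lra)). pose proof (pow_le q n ltac:(lra)). nra.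
Qed.

Lemma pq_int_bound n : p <= 1 -> pq_int p q n * (1 - q) <= 1.
Proof.
  intros Hp. induction n as [|n IH].
  - unfold pq_int; simpl. replace ((1 - 1) / (p - q) * (1 - q)) with 0 by (field; lra). lra.
  - rewrite pq_int_S_rec.
    pose proof (pow_le_one p n ltac:(lra)). pose proof (pow_le p n ltac:(lra)).
    nra.
Qed.

End PQBounds.

Lemma Mop_at_1 p q n f : Mop p q n f 1 = f 1.
Proof. unfold Mop. destruct (Rlt_dec 1 1); [lra | reflexivity]. Qed.

Lemma pq_ratio p q : 0 < q -> q < p -> exists r, q = p * r /\ 0 < r < 1.
Proof.
  intros Hq Hqp. exists (q / p). split; [field; lra|].
  split; [apply Rdiv_lt_0_compat; lra|]. apply Rmult_lt_reg_l with p; [lra|]. field_simplify; lra.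
Qed.

Lemma Mop_psi1_le p q n x : 0 < q -> q < p -> p <= 1 -> (1 <= n)%nat -> 0 <= x <= 1 ->
  Mop p q n (fun t => t - x) x <= (p ^ n - q ^ n * x) / (q ^ 2 * pq_int p q n) + (1 / q - 1) * x.
Proof.
  intros q_gt0 q_lt_p p_le1 Hn Hx. destruct n as [|n]; [lia|].
  destruct (Rlt_or_le x 1) as [Hx1|Hx1].
  - destruct (pq_ratio p q q_gt0 q_lt_p) as (r & -> & Hr).
    apply Mop_psi1_le_lt1; lra.
  - replace x with 1 by lra. rewrite Mop_at_1.
    pose proof (pq_pow_diff_ge0 p q q_gt0 q_lt_p (S n) 1 ltac:(lra)).
    pose proof (pq_int_gt0 p q q_gt0 q_lt_p (S n) ltac:(lia)).
    assert (1 <= 1 / q)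
      by (unfold Rdiv; rewrite Rmult_1_l, <- Rinv_1; apply Rinv_le_contravar; lra).
    assert (0 <= (p ^ S n - q ^ S n * 1) / (q ^ 2 * pq_int p q (S n))).
    { apply Rdiv_le_0_compat; [lra|]. apply Rmult_lt_0_compat; [apply pow_lt|]; lra. }
    lra.
Qed.

Lemma Mop_psi2_le p q n x : 0 < q -> q < p -> p <= 1 -> (2 <= n)%nat -> 0 <= x <= 1 ->
  Mop p q n (fun t => (t - x) ^ 2) x <=
    x ^ 2 * (1 - 1 / q ^ 2 + 2 * (q + 1) / (q ^ 2 * pq_int p q n))
    + (p + q) ^ 2 / q ^ 5 * ((p ^ n - q ^ n * x) / pq_int p q n) * x
    + p * (p + q) / q ^ 6 *
      ((p ^ n - q ^ n * x) * (p ^ (n - 1) - q ^ (n - 1) * x) / (pq_int p q n * pq_int p q (n - 1))).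
Proof.
  intros q_gt0 q_lt_p p_le1 Hn Hx. destruct n as [|[|m]]; try lia.
  replace (S (S m) - 1)%nat with (S m) by lia.
  destruct (Rlt_or_le x 1) as [Hx1|Hx1].
  - destruct (pq_ratio p q q_gt0 q_lt_p) as (r & -> & Hr).
    apply Mop_psi2_le_lt1; lra.
  - replace x with 1 by lra. rewrite Mop_at_1.
    pose proof (pq_pow_diff_ge0 p q q_gt0 q_lt_p (S (S m)) 1 ltac:(lra)).
    pose proof (pq_pow_diff_ge0 p q q_gt0 q_lt_p (S m) 1 ltac:(lra)).
    pose proof (pq_int_gt0 p q q_gt0 q_lt_p (S (S m)) ltac:(lia)).
    pose proof (pq_int_gt0 p q q_gt0 q_lt_p (S m) ltac:(lia)).
    pose proof (pq_int_bound p q q_gt0 q_lt_p (S (S m)) p_le1).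
    set (I2 := pq_int p q (S (S m))) in *. set (I1 := pq_int p q (S m)) in *.
    assert (0 < q ^ 2 * I2) by (apply Rmult_lt_0_compat; [apply pow_lt|]; lra).
    (* [1 - 1/q^2 + 2(q+1)/(q^2 I2) = (q+1)(2 - I2 (1-q)) / (q^2 I2)] and [I2 (1-q) <= 1]. *)
    assert (0 <= 1 ^ 2 * (1 - 1 / q ^ 2 + 2 * (q + 1) / (q ^ 2 * I2))).
    { replace (1 ^ 2 * (1 - 1 / q ^ 2 + 2 * (q + 1) / (q ^ 2 * I2)))
        with ((q + 1) * (2 - I2 * (1 - q)) / (q ^ 2 * I2)) by (field; lra).
      apply Rdiv_le_0_compat; nra. }
    assert (0 <= (p + q) ^ 2 / q ^ 5 * ((p ^ S (S m) - q ^ S (S m) * 1) / I2) * 1).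
    { rewrite Rmult_1_r. apply Rmult_le_pos; apply Rdiv_le_0_compat; try lra.
      apply pow2_ge_0. apply pow_lt; lra. }
    assert (0 <= p * (p + q) / q ^ 6 *
                 ((p ^ S (S m) - q ^ S (S m) * 1) * (p ^ S m - q ^ S m * 1) / (I2 * I1))).
    { apply Rmult_le_pos; apply Rdiv_le_0_compat; try nra. apply pow_lt; lra. }
    replace ((1 - 1) ^ 2) with 0 by ring. lra.
Qed.

Theorem corollary1 (p q : R) (n : nat) :
  0 < q -> q < p -> p <= 1 ->
  forall x : R, 0 <= x <= 1 ->
  ((1 <= n)%nat ->
     Mop p q n (fun t => t - x) x <=
       (p ^ n - q ^ n * x) / (q ^ 2 * pq_int p q n) + (1 / q - 1) * x) /\
  ((2 <= n)%nat ->
     Mop p q n (fun t => (t - x) ^ 2) x <=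
       x ^ 2 * (1 - 1 / q ^ 2 + 2 * (q + 1) / (q ^ 2 * pq_int p q n))
       + (p + q) ^ 2 / q ^ 5 * ((p ^ n - q ^ n * x) / pq_int p q n) * x
       + p * (p + q) / q ^ 6 *
         ((p ^ n - q ^ n * x) * (p ^ (n - 1) - q ^ (n - 1) * x)
          / (pq_int p q n * pq_int p q (n - 1)))).
Proof.
  intros q_gt0 q_lt_p p_le1 x Hx.
  split; intros Hn; [apply Mop_psi1_le | apply Mop_psi2_le]; assumption.
Qed.
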